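(* Let $\varepsilon \geq \gamma > 0$, and let $H$ be an $n$-vertex $k$-graph with $\delta_{k-1}(H) \geq (1/3 + \varepsilon) n$. Let $G$ be the $\gamma$-diamond graph of $H$. Then the independence number of $G$ satisfies $\alpha(G) \leq 2$.
   Context: $k \geq 2$. $\delta_{k-1}(H)$ is the minimum over $(k-1)$-subsets $S \subseteq V(H)$ of the number of edges containing $S$. For $x, y \in V(H)$, an $(x,y)$-diamond is a pair of edges $e, f$ of $H$ with $|e \cap f| = k-1$, $x \in e\setminus f$, $y \in f \setminus e$. The $\gamma$-diamond graph of an $n$-vertex $k$-graph $H$ is the graph $G$ on $V(H)$ with $xy \in E(G)$ if and only if $H$ contains at least $\gamma\binom{n}{k-1}$ distinct $(x,y)$-diamonds. *)

From HB Require Import structures.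
From mathcomp Require Import all_boot all_order all_algebra.
Set Implicit Arguments. Unset Strict Implicit. Unset Printing Implicit Defensive.
Import Order.TTheory GRing.Theory Num.Theory.
Local Open Scope ring_scope.

Definition kgraph (V : finType) (k : nat) (E : {set {set V}}) : Prop :=
  forall e, e \in E -> #|e| = k :> nat.

Definition codeg (V : finType) (E : {set {set V}}) (S : {set V}) : nat :=
  #|[set e in E | S \subset e]|.

Definition min_codeg_ge (R : realFieldType) (V : finType) (k : nat)
    (E : {set {set V}}) (d : R) : Prop :=
  forall S : {set V}, #|S| = k.-1 :> nat -> d <= (codeg E S)%:R.

Definition diamonds (V : finType) (k : nat) (E : {set {set V}}) (x y : V)
    : {set {set V} * {set V}} :=
  [set ef | [&& ef.1 \in E, ef.2 \in E, #|ef.1 :&: ef.2| == k.-1 :> nat,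
              (x \in ef.1) && (x \notin ef.2) &
              (y \in ef.2) && (y \notin ef.1)]].

Definition diamond_adj (R : realFieldType) (V : finType) (k : nat)
    (E : {set {set V}}) (gamma : R) (x y : V) : bool :=
  gamma * ('C(#|V|, k.-1))%:R <= (#|diamonds k E x y|)%:R.

Definition independent (V : finType) (adj : V -> V -> bool) (A : {set V}) : Prop :=
  forall x y, x \in A -> y \in A -> x != y -> ~~ adj x y.

Definition indep_number_le (V : finType) (adj : V -> V -> bool) (m : nat) : Prop :=
  forall A : {set V}, independent adj A -> (#|A| <= m)%N.

From HB Require Import structures.
From mathcomp Require Import all_boot all_order all_algebra.
From mathcomp Require Import zify lra.
Import Order.TTheory GRing.Theory Num.Theory.
Set Implicit Arguments. Unset Strict Implicit. Unset Printing Implicit Defensive.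

(* The link L(x) of a vertex x is the family of (k-1)-sets S with S + x an
   edge.  Double counting the pairs (S, e) with x in S and S a subset of the
   edge e gives |L(x)| >= (1/3 + eps) C(n, k-1).  Every S in L(x) /\ L(y) yields
   the (x,y)-diamond (S + x, S + y), so if x, y, z were pairwise non-adjacent
   in the diamond graph, the three links would pairwise share fewer than
   gamma C(n, k-1) sets; inclusion-exclusion among the C(n, k-1) sets of size
   k-1 then gives 3 (1/3 + eps) < 1 + 3 gamma, contradicting gamma <= eps. *)

Lemma cards_sum3_le (T : finType) (A B C : {set T}) :
  (#|A| + #|B| + #|C| <=
   #|A :|: B :|: C| + #|A :&: B| + #|B :&: C| + #|A :&: C|)%N.
Proof.
have := cardsUI A B; have := cardsUI (A :|: B) C; rewrite setIUl.
have := (leq_card_setU (A :&: C) (B :&: C)).1; lia.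
Qed.

Lemma card_ksets_mem (T : finType) (m : nat) (x : T) :
  #|[set S : {set T} | (#|S| == m) && (x \in S)]| * #|T| = m * 'C(#|T|, m).
Proof.
have split_mem := cardsID [set S : {set T} | x \in S] [set S : {set T} | #|S| == m].
have -> : [set S : {set T} | (#|S| == m) && (x \in S)] =
          [set S : {set T} | #|S| == m] :&: [set S : {set T} | x \in S].
  by apply/setP => S; rewrite !inE.
have avoid : [set S : {set T} | #|S| == m] :\: [set S : {set T} | x \in S] =
             [set S : {set T} | S \subset [set~ x] & #|S| == m].
  by apply/setP => S; rewrite !inE subsetC sub1set !inE andbC.
move: split_mem; rewrite {}avoid cards_draws cardsC1 card_draws.
have : (0 < #|T|)%N by apply/card_gt0P; exists x.
case: #|T| => [//|n] _; case: m => [|m] /=.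
  by rewrite !bin0 mul0n; lia.
rewrite binS addnC => /eqP; rewrite eqn_add2l => /eqP ->.
by rewrite -binS -mul_bin_diag mulnC.
Qed.

Lemma card_maximal_subsets_mem (T : finType) (e : {set T}) (x : T) :
  x \in e ->
  #|[set S : {set T} | [&& S \subset e, x \in S & #|S| == #|e|.-1]]| = #|e|.-1.
Proof.
move=> xe; rewrite (cardsD1 x e) xe /=.
have -> : [set S : {set T} | [&& S \subset e, x \in S & #|S| == #|e :\ x|]] =
    [set S : {set T} | S \subset e & #|S| == #|e :\ x|]
    :\: [set S : {set T} | S \subset e :\ x & #|S| == #|e :\ x|].
  apply/setP => S; rewrite !inE subsetD1.
  by case: (x \in S); case: (_ \subset _); case: (_ == _).
rewrite [#|[set _ | _] :\: _|]cardsDS; last first.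
  by apply/subsetP => S; rewrite !inE subsetD1 => /andP[/andP[-> _] ->].
rewrite !cards_draws (cardsD1 x e) xe binn add1n.
by case: #|e :\ x| => [//|n]; rewrite binSn subn1.
Qed.

Local Open Scope ring_scope.

Section Links.

Variables (V : finType) (k : nat) (E : {set {set V}}).
Hypothesis kE : kgraph k E.

Definition link (x : V) : {set {set V}} :=
  [set S : {set V} | (#|S| == k.-1) && (x |: S \in E)].

Lemma sum_codeg_mem (x : V) :
  (\sum_(S : {set V} | (#|S| == k.-1) && (x \in S)) codeg E S =
   #|[set e in E | x \in e]| * k.-1)%N.
Proof.
rewrite -sum_nat_const.
transitivity (\sum_(S : {set V} | (#|S| == k.-1) && (x \in S))
                \sum_(e in E | S \subset e) 1)%N.
  apply: eq_bigr => S _; rewrite /codeg -sum1_card.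
  by apply: eq_bigl => e; rewrite inE.
rewrite (exchange_big_dep (fun e => e \in E)) /=; last by move=> S e _ /andP[].
rewrite (bigID (fun e : {set V} => x \in e)) /= [X in (_ + X)%N]big1 ?addn0; last first.
  move=> e /andP[_ xNe]; apply: big1 => S /andP[/andP[_ xS] /andP[_ Se]].
  by rewrite (subsetP Se _ xS) in xNe.
rewrite [RHS](eq_bigl (fun e => (e \in E) && (x \in e))); last by move=> e; rewrite inE.
apply: eq_bigr => e /andP[eE xe].
rewrite sum1_card -(kE eE) -[in RHS](card_maximal_subsets_mem xe).
apply: eq_card => S; rewrite !inE unfold_in /= eE.
by case: (x \in S); case: (_ \subset _); case: (_ == _).
Qed.

Lemma notin_link (x : V) (S : {set V}) : S \in link x -> x \notin S.
Proof.
rewrite inE => /andP[/eqP cardS /kE cardxS].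
have : (0 < #|x |: S|)%N by apply/card_gt0P; exists x; rewrite setU11.
by move: cardxS; rewrite cardsU1 cardS; case: (x \in S) => /=; lia.
Qed.

Lemma card_edges_mem_le_link (x : V) :
  (#|[set e in E | x \in e]| <= #|link x|)%N.
Proof.
have inj : {in [set e in E | x \in e] &, injective (fun e => e :\ x)}.
  move=> e1 e2; rewrite !inE => /andP[_ xe1] /andP[_ xe2] eq12.
  by rewrite -(setD1K xe1) -(setD1K xe2) eq12.
rewrite -(card_in_imset inj); apply: subset_leq_card.
apply/subsetP => S /imsetP[e]; rewrite inE => /andP[eE xe] ->.
by rewrite inE setD1K // eE andbT -(kE eE) (cardsD1 x e) xe.
Qed.

Lemma card_linkI_le_diamonds (x y : V) :
  x != y -> (#|link x :&: link y| <= #|diamonds k E x y|)%N.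
Proof.
move=> neq_xy.
have inj : {in link x :&: link y &, injective (fun S => (x |: S, y |: S))}.
  move=> S1 S2; rewrite !in_setI => /andP[S1x _] /andP[S2x _] [eq12 _].
  by rewrite -(setU1K (notin_link S1x)) -(setU1K (notin_link S2x)) eq12.
rewrite -(card_in_imset inj); apply: subset_leq_card.
apply/subsetP => p /imsetP[S]; rewrite inE => /andP[Sx Sy] ->.
have xNS := notin_link Sx; have yNS := notin_link Sy.
move: Sx Sy; rewrite !inE => /andP[/eqP cardS ex] /andP[_ ey].
have -> : (x |: S) :&: (y |: S) = S.
  apply/setP => v; rewrite !inE.
  case: (eqVneq v x) => [->|_]; first by rewrite (negbTE xNS) (negbTE neq_xy).
  by case: (v == y); rewrite /= ?andbT ?andbb.
rewrite /= ex ey cardS !eqxx (negbTE xNS) (negbTE yNS) (negbTE neq_xy).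
by rewrite eq_sym (negbTE neq_xy).
Qed.

Lemma card_link_ge (R : realFieldType) (t : R) (x : V) :
  (2 <= k)%N -> min_codeg_ge k E (t * #|V|%:R) ->
  t * 'C(#|V|, k.-1)%:R <= #|link x|%:R.
Proof.
move=> k_ge2 codegE.
pose through_x := [set S : {set V} | (#|S| == k.-1) && (x \in S)].
have double_count :
    #|through_x|%:R * (t * #|V|%:R) <= (#|[set e in E | x \in e]| * k.-1)%:R :> R.
  rewrite -sum_codeg_mem natr_sum -sum1dep_card natr_sum mulr_suml.
  by apply: ler_sum => S /andP[/eqP cardS _]; rewrite mul1r; apply: codegE.
have km1_gt0 : 0 < k.-1%:R :> R by rewrite ltr0n; case: k k_ge2 => [|[]].
rewrite -(ler_pM2l km1_gt0); apply: le_trans (le_trans double_count _).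
  by rewrite mulrCA -natrM -(card_ksets_mem _ x) natrM mulrCA.
by rewrite natrM mulrC ler_pM2l // ler_nat card_edges_mem_le_link.
Qed.

End Links.

Theorem lemma7p2 (R : realFieldType) (k : nat) (V : finType)
    (E : {set {set V}}) (eps gamma : R) :
  (2 <= k)%N -> 0 < gamma -> gamma <= eps ->
  kgraph k E ->
  min_codeg_ge k E (((3%:R)^-1 + eps) * (#|V|)%:R) ->
  indep_number_le (diamond_adj k E gamma) 2.
Proof.
move=> k_ge2 _ gamma_le_eps kE codegE A indepA.
rewrite leqNgt; apply/negP => /card_gt2P[x [y [z [[xA yA zA] [nxy nyz nzx]]]]].
set C : R := 'C(#|V|, k.-1)%:R.
have sparse u v : u \in A -> v \in A -> u != v ->
    #|link k E u :&: link k E v|%:R < gamma * C.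
  move=> uA vA nuv; apply: (@le_lt_trans _ _ #|diamonds k E u v|%:R).
    by rewrite ler_nat card_linkI_le_diamonds.
  by rewrite ltNge; apply: indepA.
have dense u : (3%:R^-1 + eps) * C <= #|link k E u|%:R by apply: card_link_ge.
have cover : #|link k E x :|: link k E y :|: link k E z|%:R <= C.
  rewrite ler_nat -card_draws; apply: subset_leq_card; apply/subsetP => S.
  by rewrite !inE -!orbA => /or3P[] /andP[].
have := cards_sum3_le (link k E x) (link k E y) (link k E z).
rewrite -(ler_nat R) !natrD => inclusion_exclusion.
have := sparse x y xA yA nxy; have := sparse y z yA zA nyz.
have := sparse x z xA zA; rewrite eq_sym => /(_ nzx).
have := dense x; have := dense y; have := dense z; rewrite mulrDl.
have : gamma * C <= eps * C by rewrite ler_wpM2r ?ler0n.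
lra.
Qed.
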